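(* There exist singleton languages $L_1, L_2$ (over a finite alphabet) such that $\mathbb{PGI}^*(L_1)$ and $\mathbb{SGI}^*(L_2)$ are not regular. (For instance, over $\{a,b\}$, $\mathbb{PGI}^*(\{aab\}) \cap a^*b^* = \{a^i b^j \mid 2 \leq i \leq j+1\}$, and $\mathbb{SGI}^*(\{abb\})$ is non-regular.)
   Context: Prefix-guided insertion: $x \stackrel{\rm pgi}{\leftarrow} y = \{ x_1 y_1 y_2 x_2 \mid x = x_1 y_1 x_2,\ y = y_1 y_2,\ y_1 \neq \varepsilon \}$; suffix-guided insertion: $x \stackrel{\rm sgi}{\leftarrow} y = \{ x_1 y_1 y_2 x_2 \mid x = x_1 y_2 x_2,\ y = y_1 y_2,\ y_2 \neq \varepsilon \}$; both extended to languages by union over all pairs. For a language $L$: $\mathbb{PGI}^{(0)}(L) = L$, $\mathbb{PGI}^{(i+1)}(L) = \mathbb{PGI}^{(i)}(L) \stackrel{\rm pgi}{\leftarrow} \mathbb{PGI}^{(i)}(L)$, and $\mathbb{PGI}^*(L) = \bigcup_{i \geq 0} \mathbb{PGI}^{(i)}(L)$; $\mathbb{SGI}^*(L)$ is defined in the same way using $\stackrel{\rm sgi}{\leftarrow}$. *)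

From mathcomp Require Import all_boot.
Set Implicit Arguments. Unset Strict Implicit. Unset Printing Implicit Defensive.

Definition lang (T : Type) := seq T -> Prop.

Definition singleton_lang (T : Type) (w : seq T) : lang T := fun z => z = w.

Definition pgi_word (T : Type) (x y : seq T) : lang T := fun z =>
  exists x1 y1 y2 x2 : seq T,
    [/\ x = x1 ++ y1 ++ x2, y = y1 ++ y2, y1 <> [::] & z = x1 ++ y1 ++ y2 ++ x2].

Definition sgi_word (T : Type) (x y : seq T) : lang T := fun z =>
  exists x1 y1 y2 x2 : seq T,
    [/\ x = x1 ++ y2 ++ x2, y = y1 ++ y2, y2 <> [::] & z = x1 ++ y1 ++ y2 ++ x2].

Definition pgi_lang (T : Type) (L1 L2 : lang T) : lang T := fun z =>
  exists x y, L1 x /\ L2 y /\ pgi_word x y z.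
Definition sgi_lang (T : Type) (L1 L2 : lang T) : lang T := fun z =>
  exists x y, L1 x /\ L2 y /\ sgi_word x y z.

Fixpoint PGI_iter (T : Type) (i : nat) (L : lang T) : lang T :=
  match i with
  | 0 => L
  | i'.+1 => pgi_lang (PGI_iter i' L) (PGI_iter i' L)
  end.
Fixpoint SGI_iter (T : Type) (i : nat) (L : lang T) : lang T :=
  match i with
  | 0 => L
  | i'.+1 => sgi_lang (SGI_iter i' L) (SGI_iter i' L)
  end.

Definition PGI_star (T : Type) (L : lang T) : lang T := fun z => exists i, PGI_iter i L z.
Definition SGI_star (T : Type) (L : lang T) : lang T := fun z => exists i, SGI_iter i L z.

Definition regular (T : finType) (L : lang T) : Prop :=
  exists (Q : finType) (q0 : Q) (delta : Q -> T -> Q) (F : pred Q),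
    forall w : seq T, L w <-> F (foldl delta q0 w).

From mathcomp Require Import all_boot zify.
Set Implicit Arguments. Unset Strict Implicit. Unset Printing Implicit Defensive.

(* Write a for [true] and b for [false].  Every word w of PGI*({aab}) has at
   most one more a than b, and every proper suffix of w has no more a's than
   b's: an insertion x1 y1 y2 x2 of y into x = x1 y1 x2 counts like x plus the
   proper suffix y2 of y, and each of its proper suffixes counts like a proper
   suffix of x plus a proper suffix of y.  Since a^(n+2) b^(n+1) lies in
   PGI*({aab}) for every n, the prefixes a^(n+2) are pairwise distinguishable,
   so no finite automaton accepts the language.  Reversing a word and swapping
   its letters turns suffix-guided insertion into prefix-guided insertion and
   {abb} into {aab}, which gives the bound #b <= #a + 1 on SGI*({abb}); it
   separates the prefixes a^(n+1) by the words a^(n+1) b^(n+2) of SGI*({abb}). *)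

Lemma not_regular_of_distinguishable (T : finType) (L : lang T)
    (u : nat -> seq T) :
  (forall i j, i < j -> exists v, ~ (L (u i ++ v) <-> L (u j ++ v))) ->
  ~ regular L.
Proof.
move=> distinguishable [Q [q0 [delta [F L_F]]]].
pose state (i : 'I_#|Q|.+1) := foldl delta q0 (u i).
have /injectivePn [i [j neq_ij eq_ij]] : ~~ injectiveb state.
  by apply/injectiveP => /leq_card; rewrite card_ord ltnn.
have same v : L (u i ++ v) <-> L (u j ++ v).
  have run_eq : foldl delta q0 (u i ++ v) = foldl delta q0 (u j ++ v).
    by rewrite !foldl_cat; congr foldl.
  by rewrite !L_F run_eq.
case: (ltngtP i j) => [lt_ij | lt_ji | eq_ij'].
- by have [v] := distinguishable _ _ lt_ij; apply.
- by have [v] := distinguishable _ _ lt_ji; apply; apply: iff_sym.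
- by move: neq_ij; rewrite (val_inj eq_ij') eqxx.
Qed.

Section ClosedLanguages.
Variable T : Type.
Implicit Types (L P : lang T) (x y z : seq T).

Definition pgi_closed P := forall x y z, P x -> P y -> pgi_word x y z -> P z.
Definition sgi_closed P := forall x y z, P x -> P y -> sgi_word x y z -> P z.

Lemma PGI_star_ind L P :
  (forall w, L w -> P w) -> pgi_closed P -> forall w, PGI_star L w -> P w.
Proof.
move=> LP closedP w [n]; elim: n w => [|n IHn] w /=; first exact: LP.
by case=> x [y [/IHn Px [/IHn Py xyw]]]; apply: closedP Px Py xyw.
Qed.

Lemma SGI_star_ind L P :
  (forall w, L w -> P w) -> sgi_closed P -> forall w, SGI_star L w -> P w.
Proof.
move=> LP closedP w [n]; elim: n w => [|n IHn] w /=; first exact: LP.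
by case=> x [y [/IHn Px [/IHn Py xyw]]]; apply: closedP Px Py xyw.
Qed.

Lemma pgi_word_refl x : x <> [::] -> pgi_word x x x.
Proof. by exists [::], x, [::], [::]; rewrite cats0. Qed.

Lemma sgi_word_refl x : x <> [::] -> sgi_word x x x.
Proof. by exists [::], [::], x, [::]; rewrite cats0. Qed.

Lemma PGI_iter_base L w n : L w -> w <> [::] -> PGI_iter n L w.
Proof.
move=> Lw w_neq0; elim: n => //= n IHn.
by exists w, w; split=> //; split=> //; apply: pgi_word_refl.
Qed.

Lemma SGI_iter_base L w n : L w -> w <> [::] -> SGI_iter n L w.
Proof.
move=> Lw w_neq0; elim: n => //= n IHn.
by exists w, w; split=> //; split=> //; apply: sgi_word_refl.
Qed.

End ClosedLanguages.

Lemma sgi_word_map_rev (T T' : Type) (f : T -> T') (x y z : seq T) :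
  sgi_word x y z -> pgi_word (map f (rev x)) (map f (rev y)) (map f (rev z)).
Proof.
case=> x1 [y1 [y2 [x2 [-> -> y2_neq0 ->]]]].
exists (map f (rev x2)), (map f (rev y2)), (map f (rev y1)), (map f (rev x1)).
split; rewrite ?rev_cat ?map_cat ?catA //.
by case: y2 y2_neq0 => // c y2; rewrite rev_cons map_rcons; case: map.
Qed.

Lemma sgi_closed_map_rev (T T' : Type) (f : T -> T') (P : lang T') :
  pgi_closed P -> sgi_closed (fun w => P (map f (rev w))).
Proof. by move=> closedP x y z Px Py /(sgi_word_map_rev f); apply: closedP. Qed.

Section InsertionCounts.
Variable T : eqType.
Implicit Types x y z : seq T.

Lemma drop_addn_cat (s t : seq T) n : drop (n + size s) (s ++ t) = drop n t.
Proof. by rewrite -drop_drop drop_size_cat. Qed.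

Lemma pgi_word_perm x y z :
  pgi_word x y z -> exists2 j, 0 < j & perm_eq z (x ++ drop j y).
Proof.
case=> x1 [y1 [y2 [x2 [-> -> y1_neq0 ->]]]].
exists (0 + size y1); first by case: y1 y1_neq0.
by rewrite drop_addn_cat drop0 -!catA !perm_cat2l perm_catC.
Qed.

Lemma pgi_word_perm_drop x y z k : pgi_word x y z -> 0 < k ->
  exists i j, [/\ 0 < i, 0 < j & perm_eq (drop k z) (drop i x ++ drop j y)].
Proof.
case=> x1 [y1 [y2 [x2 [-> -> y1_neq0 ->]]]] k_gt0.
have y1_gt0 : 0 < size y1 by case: y1 y1_neq0.
have x12_gt0 : 0 < size (x1 ++ y1) by rewrite size_cat addn_gt0 y1_gt0 orbT.
rewrite catA [x1 ++ y1 ++ x2]catA; move: (x1 ++ y1) x12_gt0 => x12 x12_gt0.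
have [lt_k | le_k] := ltnP k (size x12).
  exists k, (0 + size y1); split => //; rewrite drop_addn_cat drop0.
  by rewrite !drop_cat lt_k -catA perm_cat2l perm_catC.
rewrite drop_cat ltnNge le_k; set k' := k - size x12.
have [lt_k' | le_k'] := ltnP k' (size y2).
  exists (0 + size x12), (k' + size y1); rewrite ?addn_gt0 ?y1_gt0 ?orbT.
  by split=> //; rewrite !drop_addn_cat drop0 drop_cat lt_k' perm_catC.
exists (k' - size y2 + size x12), (0 + size (y1 ++ y2)).
split; [by rewrite addn_gt0 x12_gt0 orbT | by rewrite size_cat; lia |].
by rewrite add0n drop_size cats0 drop_addn_cat drop_cat ltnNge le_k'.
Qed.

End InsertionCounts.

Definition a_excess_bounded (w : seq bool) : Prop :=
  count id w <= count negb w + 1 /\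
  forall k, 0 < k -> count id (drop k w) <= count negb (drop k w).

Lemma pgi_closed_a_excess_bounded : pgi_closed a_excess_bounded.
Proof.
move=> x y z [x_total x_suffix] [_ y_suffix] xyz; split.
  have [j j_gt0 /permP zE] := pgi_word_perm xyz.
  by rewrite !zE !count_cat addnAC leq_add // y_suffix.
move=> k k_gt0; have [i [j [i_gt0 j_gt0 /permP zE]]] := pgi_word_perm_drop xyz k_gt0.
by rewrite !zE !count_cat leq_add // (x_suffix, y_suffix).
Qed.

Lemma PGI_star_aab_bound w :
  PGI_star (singleton_lang [:: true; true; false]) w ->
  count id w <= count negb w + 1.
Proof.
move/(PGI_star_ind _ pgi_closed_a_excess_bounded) => [] // _ ->.
by split=> // -[|[|[|k]]].
Qed.

Lemma SGI_star_abb_bound w :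
  SGI_star (singleton_lang [:: true; false; false]) w ->
  count negb w <= count id w + 1.
Proof.
have /SGI_star_ind excess := sgi_closed_map_rev (f := negb) pgi_closed_a_excess_bounded.
case/excess => [_ -> | ]; first by split=> // -[|[|[|k]]].
rewrite !count_map !count_rev.
by rewrite (@eq_count _ (preim negb negb) id) // => b; rewrite /= negbK.
Qed.

Lemma nseq_cons_cat (T : Type) (x : T) n s : nseq n x ++ x :: s = x :: nseq n x ++ s.
Proof. by elim: n => //= n ->. Qed.

Lemma PGI_star_aab n :
  PGI_star (singleton_lang [:: true; true; false]) (nseq n.+2 true ++ nseq n.+1 false).
Proof.
exists n; elim: n => [|n IHn] //=.
exists (nseq n.+2 true ++ nseq n.+1 false), [:: true; true; false].
split=> //; split; first exact: PGI_iter_base.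
exists (nseq n.+1 true), [:: true], [:: true; false], (nseq n.+1 false).
by split; rewrite //= !nseq_cons_cat.
Qed.

Lemma SGI_star_abb n :
  SGI_star (singleton_lang [:: true; false; false]) (nseq n.+1 true ++ nseq n.+2 false).
Proof.
exists n; elim: n => [|n IHn] //=.
exists (nseq n.+1 true ++ nseq n.+2 false), [:: true; false; false].
split=> //; split; first exact: SGI_iter_base.
exists (nseq n.+1 true), [:: true; false], [:: false], (nseq n.+1 false).
by split; rewrite //= !nseq_cons_cat.
Qed.

Theorem proposition4p4 :
  exists (T : finType) (w1 w2 : seq T),
    ~ regular (PGI_star (singleton_lang w1)) /\
    ~ regular (SGI_star (singleton_lang w2)).
Proof.
exists bool, [:: true; true; false], [:: true; false; false]; split.
- apply: (not_regular_of_distinguishable (u := fun n => nseq n.+2 true)).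
  move=> i j lt_ij; exists (nseq i.+1 false).
  move=> /iffLR /(_ (PGI_star_aab i)) /PGI_star_aab_bound.
  by rewrite !count_cat !count_nseq /=; lia.
- apply: (not_regular_of_distinguishable (u := fun n => nseq n.+1 true)).
  move=> i j lt_ij; exists (nseq j.+2 false).
  move=> /iffRL /(_ (SGI_star_abb j)) /SGI_star_abb_bound.
  by rewrite !count_cat !count_nseq /=; lia.
Qed.
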